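(* Let $S_2=\mathrm{span}\langle e,f\rangle$ be the two-dimensional Lie triple system with $[e,f,e]=2e$, $[e,f,f]=-2f$, over a field of characteristic zero, and let $U(S_2)$ be its universal enveloping algebra. Then for every $n\ge 0$, $(e^n,f,e)=-n\,e^n$, i.e. $-2(e^n,f,e)=2n\,e^n$.
   Context: A Lie triple system (L.t.s.) is a vector space $T$ with a trilinear product $[x,y,z]$ satisfying $[x,x,y]=0$, $[x,y,z]+[y,z,x]+[z,x,y]=0$, and $[a,b,[x,y,z]]=[[a,b,x],y,z]+[x,[a,b,y],z]+[x,y,[a,b,z]]$; the product on $S_2$ is determined by the given values together with these identities. For a unital nonassociative algebra $A$ with associator $(x,y,z)=(xy)z-x(yz)$, $\mathrm{LN_{alt}}(A)=\{a\in A : (a,x,y)=-(x,a,y)\ \forall x,y\in A\}$ is an L.t.s. with $[a,b,c]=a(bc)-b(ac)-c(ab)+c(ba)$. The universal enveloping algebra $U(T)$ is the unital algebra with an L.t.s. monomorphism $T\to\mathrm{LN_{alt}}(U(T))$ (elements of $T$ identified with their images) such that $ab=ba$ for $a,b\in T$, universal for L.t.s. homomorphisms into $\mathrm{LN_{alt}}(A)$ with this commutation property. For $c\in T$ the subalgebra generated by $c$ is associative, so $c^n$ is well defined ($c^0=1$). *)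

From HB Require Import structures.
From mathcomp Require Import all_boot all_order all_algebra.
Set Implicit Arguments. Unset Strict Implicit. Unset Printing Implicit Defensive.
Import GRing.Theory.
Local Open Scope ring_scope.

Record NAlg (K : fieldType) := {
  car :> lmodType K;
  nmul : car -> car -> car;
  none : car;
  nmulDl : forall x y z, nmul (x + y) z = nmul x z + nmul y z;
  nmulDr : forall x y z, nmul x (y + z) = nmul x y + nmul x z;
  nmulZl : forall (a : K) x y, nmul (a *: x) y = a *: nmul x y;
  nmulZr : forall (a : K) x y, nmul x (a *: y) = a *: nmul x y;
  nmul1l : forall x, nmul none x = x;
  nmul1r : forall x, nmul x none = x
}.

Section NAlgDefs.
Variables (K : fieldType) (A : NAlg K).
Local Notation "x ** y" := (nmul x y) (at level 40, left associativity).

Definition nassoc (x y z : A) : A := (x ** y) ** z - x ** (y ** z).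

Definition inLNalt (a : A) : Prop :=
  forall x y : A, nassoc a x y = - nassoc x a y.

Definition ltp (a b c : A) : A :=
  a ** (b ** c) - b ** (a ** c) - c ** (a ** b) + c ** (b ** a).

(* c^n, with c^0 = 1 and c^(n+1) = c c^n (any bracketing agrees since the
   subalgebra generated by an element of T is associative) *)
Fixpoint npow (c : A) (n : nat) : A :=
  match n with O => none A | S m => c ** npow c m end.

(* x, y are the images of the basis e, f of S_2 under a Lie triple system
   homomorphism S_2 -> LN_alt(A) whose image consists of commuting elements.
   The full product table of S_2 (forced by the L.t.s. identities from
   [e,f,e]=2e, [e,f,f]=-2f) is listed on all basis triples. *)
Definition S2_hom (x y : A) : Prop :=
  [/\ inLNalt x, inLNalt y, x ** y = y ** x,
      [/\ ltp x y x = 2%:R *: x, ltp x y y = - (2%:R *: y),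
          ltp y x x = - (2%:R *: x) & ltp y x y = 2%:R *: y]
    & [/\ ltp x x x = 0, ltp x x y = 0, ltp y y x = 0 & ltp y y y = 0]].
End NAlgDefs.

Definition NAlg_hom (K : fieldType) (A B : NAlg K) (h : A -> B) : Prop :=
  [/\ forall x y : A, h (x + y) = h x + h y,
      forall (a : K) (x : A), h (a *: x) = a *: h x,
      forall x y : A, h (nmul x y) = nmul (h x) (h y)
    & h (none A) = none B].

(* (A, e, f) is the universal enveloping algebra U(S_2): the inclusion
   S_2 -> LN_alt(A) (e |-> e, f |-> f) is an injective L.t.s. homomorphism with
   commuting image, universal among such homomorphisms. *)
Definition is_UEA_S2 (K : fieldType) (A : NAlg K) (e f : A) : Prop :=
  [/\ S2_hom e f,
      (forall a b : K, a *: e + b *: f = 0 -> a = 0 /\ b = 0)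
    & forall (B : NAlg K) (e' f' : B), S2_hom e' f' ->
        exists h : A -> B,
          [/\ NAlg_hom h, h e = e', h f = f'
            & forall g : A -> B, NAlg_hom g -> g e = e' -> g f = f' ->
                forall x, g x = h x]].

(* For a in LN_alt(A) the defining identity reads L_(ax+xa) = L_a L_x + L_x L_a.
   With x = e^n it gives L_(e^n) = (L_e)^n, and for commuting e, f in LN_alt(A)
   it makes [L_e, L_f] = -2 (e,f,_) a derivation of A.  Since (e,f,e) = -e by
   [e,f,e] = 2e, an induction on n gives (e^(n+1),f,y) = (n+1) e^n (e,f,y) for
   every y, and y = e is the claim. *)

From mathcomp Require Import all_boot all_order all_algebra.
Set Implicit Arguments.
Unset Strict Implicit.
Unset Printing Implicit Defensive.
Import GRing.Theory.
Local Open Scope ring_scope.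

Inductive zmod_expr :=
  | ZVar of nat
  | ZZero
  | ZAdd of zmod_expr & zmod_expr
  | ZOpp of zmod_expr
  | ZMuln of zmod_expr & nat.

Section ZmodNormalization.
Variable V : zmodType.

Fixpoint zmod_eval (env : seq V) (t : zmod_expr) : V :=
  match t with
  | ZVar i => env`_i
  | ZZero => 0
  | ZAdd s t => zmod_eval env s + zmod_eval env t
  | ZOpp t => - zmod_eval env t
  | ZMuln t k => zmod_eval env t *+ k
  end.

Fixpoint zmod_coef (t : zmod_expr) (i : nat) : int :=
  match t with
  | ZVar j => (j == i)%:Z
  | ZZero => 0
  | ZAdd s t => zmod_coef s i + zmod_coef t i
  | ZOpp t => - zmod_coef t i
  | ZMuln t k => zmod_coef t i *+ k
  end.

Lemma zmod_evalE env t :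
  zmod_eval env t = \sum_(i < size env) env`_i *~ zmod_coef t i.
Proof.
elim: t => [j||s IHs t IHt|t IHt|t IHt k] /=.
- have [lt_j|le_j] := ltnP j (size env); last first.
    rewrite nth_default // big1 // => i _.
    by case: eqP => [ji|]; [move: (ltn_ord i); rewrite -ji ltnNge le_j | ].
  rewrite (bigD1 (Ordinal lt_j)) //= eqxx big1 ?addr0 // => i /negPf.
  by rewrite -val_eqE eq_sym /= => ->.
- by rewrite big1 // => i _; rewrite mulr0z.
- by rewrite IHs IHt -big_split; apply: eq_bigr => i _; rewrite mulrzDr.
- by rewrite IHt -sumrN; apply: eq_bigr => i _; rewrite mulrNz.
- by rewrite IHt -sumrMnl; apply: eq_bigr => i _; rewrite -mulr_natr mulrzA mulrz_nat.
Qed.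

Lemma zmod_eval_eq env s t :
  all (fun i => zmod_coef s i == zmod_coef t i) (iota 0 (size env)) ->
  zmod_eval env s = zmod_eval env t.
Proof.
move/allP=> eq_st; rewrite !zmod_evalE; apply: eq_bigr => i _.
by rewrite (eqP (eq_st i _)) // mem_iota add0n ltn_ord.
Qed.

Lemma eq_by_addr (P Q L R : V) : P = Q -> L + Q = R + P -> L = R.
Proof. by move=> ->; apply: addIr. Qed.

End ZmodNormalization.

Ltac nat_literal k :=
  lazymatch k with O => idtac | S ?m => nat_literal m end.

Ltac zmod_index x l :=
  match l with
  | ?y :: _ => let _ := constr:(erefl x : x = y) in constr:(0%N)
  | _ :: ?l => let i := zmod_index x l in constr:(S i)
  end.

Ltac zmod_atoms t l :=
  match t with
  | ?s + ?t => let l := zmod_atoms s l in zmod_atoms t l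
  | - ?t => zmod_atoms t l
  | ?t *+ ?k => let _ := ltac:(nat_literal k) in zmod_atoms t l
  | 0 => l
  | _ => let _ := zmod_index t l in l
  | _ => constr:(t :: l)
  end.

Ltac zmod_reify t l :=
  match t with
  | ?s + ?t => let s := zmod_reify s l in let t := zmod_reify t l in constr:(ZAdd s t)
  | - ?t => let t := zmod_reify t l in constr:(ZOpp t)
  | ?t *+ ?k => let _ := ltac:(nat_literal k) in
                let t := zmod_reify t l in constr:(ZMuln t k)
  | 0 => constr:(ZZero)
  | _ => let i := zmod_index t l in constr:(ZVar i)
  end.

(* Decides equalities in the free abelian group on the atoms of both sides;
   [x *+ k] is an atom unless k is a numeral. *)
Ltac zmod :=
  lazymatch goal with |- @eq ?V ?L ?R =>
    let l := zmod_atoms L (@nil V) in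
    let l := zmod_atoms R l in
    let rL := zmod_reify L l in
    let rR := zmod_reify R l in
    change (zmod_eval l rL = zmod_eval l rR);
    apply: zmod_eval_eq; vm_compute; reflexivity
  end.

Ltac zmod_using H := apply: (eq_by_addr H); zmod.

Section NAlgTheory.
Variables (K : fieldType) (A : NAlg K).
Local Notation "x ** y" := (nmul x y) (at level 40, left associativity).

Lemma nmul0l (y : A) : 0 ** y = 0.
Proof. by rewrite -[X in X ** _](scale0r 0) nmulZl scale0r. Qed.

Lemma nmul0r (x : A) : x ** 0 = 0.
Proof. by rewrite -[X in _ ** X](scale0r 0) nmulZr scale0r. Qed.

Lemma nmulNl (x y : A) : (- x) ** y = - (x ** y).
Proof. by rewrite -scaleN1r nmulZl scaleN1r. Qed.

Lemma nmulNr (x y : A) : x ** (- y) = - (x ** y).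
Proof. by rewrite -scaleN1r nmulZr scaleN1r. Qed.

Lemma nmulnl (x y : A) k : (x *+ k) ** y = (x ** y) *+ k.
Proof. by elim: k => [|k IHk]; rewrite ?nmul0l // !mulrS nmulDl IHk. Qed.

Lemma nmulnr (x y : A) k : x ** (y *+ k) = (x ** y) *+ k.
Proof. by elim: k => [|k IHk]; rewrite ?nmul0r // !mulrS nmulDr IHk. Qed.

Definition nmul_distr := (nmulDl, nmulDr, nmulNl, nmulNr, nmulnl, nmulnr).

Definition jmul (x y : A) : A := x ** y + y ** x.

Hypothesis two_neq0 : (2%:R : K) != 0.

Lemma mulrn2I (x y : A) : x *+ 2 = y *+ 2 -> x = y.
Proof. by rewrite -!scaler_nat => /(scalerI two_neq0). Qed.

Section LeftNuclearAlternative.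
Variable a : A.
Hypothesis ha : inLNalt a.

Lemma lnalt_jmul x y : jmul a x ** y = a ** (x ** y) + x ** (a ** y).
Proof. by have := ha x y; rewrite /nassoc /jmul nmulDl => skew_axy; zmod_using skew_axy. Qed.

Lemma lnalt_mulA x y : a ** (x ** y) = jmul a x ** y - x ** (a ** y).
Proof. by rewrite lnalt_jmul addrK. Qed.

Lemma npow_mul_iter n y : npow a n ** y = iter n (nmul a) y.
Proof.
elim: n y => [|n IHn] y /=; first exact: nmul1l.
have npow_mul_a : npow a n ** a = a ** npow a n.
  by rewrite IHn -[a in iter _ _ a]nmul1r -iterSr /= -IHn nmul1r.
have := lnalt_jmul (npow a n) y; rewrite /jmul npow_mul_a !IHn => jmul_npow.
apply: mulrn2I.
by rewrite mulr2n -nmulDl jmul_npow -iterSr mulr2n.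
Qed.

Lemma npowS_mul n y : npow a n.+1 ** y = a ** (npow a n ** y).
Proof. by rewrite !npow_mul_iter. Qed.

Lemma npow_mulS n y : npow a n ** (a ** y) = npow a n.+1 ** y.
Proof. by rewrite !npow_mul_iter iterSr. Qed.

Lemma npow_mul n : npow a n ** a = npow a n.+1.
Proof. by rewrite -[X in _ ** X]nmul1r npow_mulS nmul1r. Qed.

End LeftNuclearAlternative.

Section CommutingPair.
Variables e f : A.
Hypotheses (he : inLNalt e) (hf : inLNalt f) (hc : e ** f = f ** e).

Definition lcomm x := e ** (f ** x) - f ** (e ** x).

Lemma jmul_commutator x : jmul e (jmul f x) - jmul f (jmul e x) = lcomm x.
Proof.
have := lnalt_jmul he x f; have := lnalt_jmul hf x e.
rewrite /lcomm /jmul hc !nmul_distr => jmul_fx jmul_ex.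
by apply: (eq_by_addr jmul_fx); zmod_using (esym jmul_ex).
Qed.

Lemma lcomm_mul x y : lcomm (x ** y) = lcomm x ** y + x ** lcomm y.
Proof.
rewrite {1}/lcomm [f ** (x ** y)](lnalt_mulA hf) [e ** (x ** y)](lnalt_mulA he).
rewrite !nmulDr !nmulNr (lnalt_mulA he (jmul f x)) (lnalt_mulA he x (f ** y)).
rewrite (lnalt_mulA hf (jmul e x)) (lnalt_mulA hf x (e ** y)).
by rewrite -jmul_commutator /lcomm !nmul_distr; zmod.
Qed.

Lemma lcomm_nassoc y : lcomm y = - nassoc e f y *+ 2.
Proof. by rewrite /lcomm /nassoc (lnalt_mulA hf e y) /jmul hc !nmul_distr; zmod. Qed.

Lemma nassoc_mul x y : nassoc e f (x ** y) = nassoc e f x ** y + x ** nassoc e f y.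
Proof.
have := lcomm_mul x y; rewrite !lcomm_nassoc !nmul_distr => lcomm_xy.
by apply: mulrn2I; zmod_using (esym lcomm_xy).
Qed.

Lemma nassoc_npowS_rec m y :
  nassoc (npow e m.+1) f y *+ 2 =
  e ** nassoc (npow e m) f y + nassoc (npow e m) f (e ** y)
  - nassoc (npow e m) f e ** y + (npow e m ** nassoc e f y) *+ 2.
Proof.
have := lnalt_jmul he (npow e m ** f) y; rewrite /jmul nmulDl => jmul_h.
rewrite /nassoc !nmul_distr (lnalt_mulA hf e y) /jmul -hc !nmul_distr.
rewrite !(npow_mulS he) !(npowS_mul he).
by zmod_using jmul_h.
Qed.

Hypothesis hefe : ltp e f e = 2%:R *: e.

Lemma nassoc_efe : nassoc e f e = - e.
Proof.
apply: oppr_inj; apply: mulrn2I.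
by rewrite -lcomm_nassoc opprK -scaler_nat -hefe /lcomm /ltp -hc; zmod.
Qed.

Lemma nassoc_e_mul y : nassoc e f (e ** y) = e ** nassoc e f y - e ** y.
Proof. by rewrite nassoc_mul nassoc_efe nmulNl addrC. Qed.

Lemma nassoc_npowS n y : nassoc (npow e n.+1) f y = (npow e n ** nassoc e f y) *+ n.+1.
Proof.
elim: n y => [|n IHn] y; first by rewrite /= nmul1r nmul1l.
apply: mulrn2I.
rewrite nassoc_npowS_rec !IHn nassoc_e_mul nassoc_efe; move: (nassoc e f y) => z.
rewrite !nmul_distr -!(npowS_mul he) !(npow_mulS he).
by rewrite (npow_mul he) [_ *+ n.+2]mulrSr mulrnBl mulNrn; zmod.
Qed.

End CommutingPair.
End NAlgTheory.

Theorem mainTheorem4 (K : fieldType) (hK : [pchar K] =i pred0)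
  (A : NAlg K) (e f : A) (hU : is_UEA_S2 e f) (n : nat) :
  nassoc (npow e n) f e = - (n%:R *: npow e n).
Proof.
have [[he hf hc [hefe _ _ _] _] _ _] := hU.
have two_neq0 : (2%:R : K) != 0 by rewrite ((pcharf0P K).1 hK).
case: n => [|n]; first by rewrite /nassoc /= !nmul1l subrr scale0r oppr0.
rewrite (nassoc_npowS two_neq0 he hf hc hefe) (nassoc_efe two_neq0 hf hc hefe).
by rewrite nmulNr (npow_mul two_neq0 he) scaler_nat mulNrn.
Qed.
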